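(* Let $L$ be a Latin array of order $n$. If $L$ has at least $(229n^2+27n)/256$ distinct symbols, then $L$ has a transversal.
   Context: An array of order $n$ is an $n\times n$ array with a symbol in each cell; an entry is a triple $(i,j,A_{ij})$. An array is Latin if no symbol appears more than once in any row or column. A transversal of an $n\times n$ array is a set of $n$ entries, no two of which agree in row, column, or symbol. *)

From mathcomp Require Import all_boot all_fingroup.
Set Implicit Arguments. Unset Strict Implicit. Unset Printing Implicit Defensive.

Definition array (T : eqType) (n : nat) := 'I_n -> 'I_n -> T.

Definition latin (T : eqType) (n : nat) (L : array T n) : Prop :=
  (forall i, injective (L i)) /\ (forall j, injective (fun i => L i j)).

Definition nsymbols (T : eqType) (n : nat) (L : array T n) : nat :=
  size (undup [seq L i j | i <- enum 'I_n, j <- enum 'I_n]).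

(* A transversal: n entries (i, s i, L i (s i)) with distinct rows (one per row),
   distinct columns (s a permutation) and distinct symbols. *)
Definition has_transversal (T : eqType) (n : nat) (L : array T n) : Prop :=
  exists s : {perm 'I_n}, injective (fun i => L i (s i)).

From mathcomp Require Import all_boot all_fingroup zify.
Set Implicit Arguments. Unset Strict Implicit. Unset Printing Implicit Defensive.

(* Call an entry unique if its symbol occurs nowhere else in L.  Counting the
   n^2 entries by symbol gives 2 k <= n^2 + #(unique entries) for k symbols.  If some unique entry (i, j) lies in a row or column with few
   unique entries, delete row i and column j: few symbols are lost, so the
   smaller array still satisfies the bound, and a transversal of it extends by
   (i, j).  Otherwise every line containing a unique entry contains many of
   them, and the counting bound leaves only few lines containing none.  Take a
   permutation s maximising first the number of positions whose symbol
   L u (s u) is not repeated along s, then the number of unique entries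
   (u, s u).  If some position were repeated, the abundance of unique entries
   would provide a swap or a 3-cycle of columns improving s; hence the entries
   along s form a transversal. *)

Lemma sum_undup_count_mem (X : eqType) (r : seq X) (F : X -> nat) :
  \sum_(x <- r) F x = \sum_(x <- undup r) count_mem x r * F x.
Proof.
rewrite -big_undup_iterop_count; apply: eq_bigr => x _.
by case: (count_mem x r) => [|c] //; rewrite iteropS iter_addn mulSn addnC mulnC.
Qed.

Lemma double_size_undup (X : eqType) (r : seq X) :
  2 * size (undup r) <= size r + count (fun x => count_mem x r == 1) r.
Proof.
rewrite -[size r]sum1_size -[size (undup r)]sum1_size -sum1_count [X in _ + X]big_mkcond /=.
rewrite (sum_undup_count_mem r (fun _ => 1)).
rewrite (sum_undup_count_mem r (fun x => if count_mem x r == 1 then 1 else 0)) /=.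
rewrite -big_split big_distrr /= !big_seq; apply: leq_sum => x.
rewrite mem_undup -has_pred1 has_count; case: (count_mem x r) => [|[|c]] //.
Qed.

Lemma exists_notin (U : finType) (A B : {set U}) :
  #|B| < #|A| -> exists2 x, x \in A & x \notin B.
Proof.
by move=> ltBA; apply/subsetPn; apply: contraTN ltBA => /subset_leq_card; rewrite leqNgt.
Qed.

Lemma count_enum (X : finType) (P : pred X) : count P (enum X) = #|[set x | P x]|.
Proof. by rewrite cardsE cardE -size_filter enumT /enum_mem. Qed.

Section Entries.
Variables (T : eqType) (n : nat) (L : array T n).

Definition entries := [seq L c.1 c.2 | c <- enum {: 'I_n * 'I_n}].

Lemma nsymbolsE : nsymbols L = size (undup entries).
Proof. by rewrite /entries enumT unlock /= /prod_enum map_allpairs. Qed.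

Definition unique_entry i j :=
  [forall c : 'I_n * 'I_n, (L c.1 c.2 == L i j) ==> (c == (i, j))].

Lemma unique_entryP i j :
  reflect (forall p q, L p q = L i j -> p = i /\ q = j) (unique_entry i j).
Proof.
apply: (iffP forallP) => [uij p q /eqP Epq|uij [p q]].
  by move: (uij (p, q)) => /= /implyP /(_ Epq) /eqP [-> ->].
by apply/implyP => /= /eqP /uij [-> ->].
Qed.

Lemma unique_entry_neq i j p q : unique_entry i j -> p != i -> L p q != L i j.
Proof. by move=> /unique_entryP uij; apply: contra_neq => /uij []. Qed.

Lemma nonunique_other_row i q : (forall i, injective (L i)) -> ~~ unique_entry i q ->
  exists2 p, p != i & exists q', L p q' = L i q.
Proof.
move=> L_row_inj /forallPn [[p q'] /=]; rewrite negb_imply => /andP [/eqP Epq' neq].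
exists p; last by exists q'.
by apply: contra_neq neq => pi; move: Epq'; rewrite pi => /L_row_inj ->.
Qed.

Definition unique_in_row i := #|[set j | unique_entry i j]|.
Definition unique_in_col j := #|[set i | unique_entry i j]|.
Definition unique_entries := [set c : 'I_n * 'I_n | unique_entry c.1 c.2].

Lemma count_entries_eq1 c : (count_mem (L c.1 c.2) entries == 1) = unique_entry c.1 c.2.
Proof.
rewrite count_map count_enum (cardsD1 c) inE /= eqxx add1n eqSS cards_eq0.
apply/eqP/forallP => [pre c'|uc].
  move/setP/(_ c'): pre; rewrite !inE -surjective_pairing.
  by case: (c' == c) => /= [_|->]; rewrite ?implybT.
apply/setP => c'; rewrite !inE; move: (uc c'); rewrite -surjective_pairing.
by case: (c' == c); case: (_ == _).
Qed.

Lemma double_nsymbols : 2 * nsymbols L <= n * n + #|unique_entries|.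
Proof.
rewrite nsymbolsE; apply: leq_trans (double_size_undup entries) _.
rewrite size_map -cardE card_prod !card_ord leq_add2l count_map.
rewrite -count_enum; apply: eq_leq; apply: eq_count => c.
by rewrite /= count_entries_eq1.
Qed.
End Entries.

Definition tr_array (T : eqType) (n : nat) (L : array T n) : array T n := fun i j => L j i.

Section Transpose.
Variables (T : eqType) (n : nat) (L : array T n).

Lemma latin_tr : latin L -> latin (tr_array L).
Proof. by case=> L_row_inj L_col_inj; split=> [i|j] x y; [apply: L_col_inj|apply: L_row_inj]. Qed.

Lemma nsymbols_tr : nsymbols (tr_array L) = nsymbols L.
Proof.
rewrite !nsymbolsE; apply: perm_size; apply: uniq_perm; rewrite ?undup_uniq // => y.
by rewrite !mem_undup; apply/mapP/mapP => -[[p q] _ ->]; exists (q, p); rewrite ?mem_enum.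
Qed.

Lemma unique_entry_tr i j : unique_entry (tr_array L) i j = unique_entry L j i.
Proof. by apply/unique_entryP/unique_entryP => uij p q /uij []. Qed.

Lemma unique_in_row_tr j : unique_in_row (tr_array L) j = unique_in_col L j.
Proof. by apply: eq_card => i; rewrite !inE unique_entry_tr. Qed.

Lemma has_transversal_tr : has_transversal (tr_array L) -> has_transversal L.
Proof.
case=> s s_inj; exists s^-1%g => x y Exy.
by apply: (perm_inj (s := s^-1%g)); apply: s_inj; rewrite /tr_array !permKV.
Qed.

End Transpose.

Section DeleteRowCol.
Variables (T : eqType) (m : nat) (L : array T m.+1) (i j : 'I_m.+1).

Definition delete_row_col : array T m := fun a b => L (lift i a) (lift j b).

Lemma latin_delete_row_col : latin L -> latin delete_row_col.
Proof.
case=> L_row_inj L_col_inj; split=> [a|b] x y /= Exy.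
  exact: lift_inj (L_row_inj _ _ _ Exy).
exact: lift_inj (L_col_inj (lift j b) _ _ Exy).
Qed.

Lemma has_transversal_delete_row_col :
  unique_entry L i j -> has_transversal delete_row_col -> has_transversal L.
Proof.
move=> /unique_entryP uij [s s_inj]; exists (lift_perm i j s) => x y.
case: (unliftP i x) => [a ->|->]; case: (unliftP i y) => [b ->|->];
  rewrite ?lift_perm_lift ?lift_perm_id //.
- by move/s_inj ->.
- by move=> /uij [_ /eqP]; rewrite eq_sym (negbTE (neq_lift _ _)).
- by move=> /esym /uij [_ /eqP]; rewrite eq_sym (negbTE (neq_lift _ _)).
Qed.

Lemma entry_delete_row_col_cases p q : (forall i, injective (L i)) -> unique_entry L i j ->
  [\/ L p q \in entries delete_row_col,
      exists2 q', unique_entry L i q' & L p q = L i q'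
    | exists2 p', p' != i & L p q = L p' j].
Proof.
move=> L_row_inj uij.
have in_del a b : L (lift i a) (lift j b) \in entries delete_row_col.
  by apply/mapP; exists (a, b); rewrite ?mem_enum.
case: (unliftP j q) => [b ->|->]; last first.
  by case: (eqVneq p i) => [->|pi]; [constructor 2; exists j | constructor 3; exists p].
case: (unliftP i p) => [a ->|->]; first by constructor 1.
case: (boolP (unique_entry L i (lift j b))) => [uib|].
  by constructor 2; exists (lift j b).
move=> /(nonunique_other_row L_row_inj) [p' p'i [q' <-]].
case: (unliftP i p') p'i => [a ->|->]; last by rewrite eqxx.
case: (unliftP j q') => [b' ->|->] _; first by constructor 1.
by constructor 3; exists (lift i a); rewrite // eq_sym neq_lift.
Qed.

Lemma nsymbols_delete_row_col : latin L -> unique_entry L i j ->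
  nsymbols L <= nsymbols delete_row_col + unique_in_row L i + m.
Proof.
move=> [L_row_inj _] uij; rewrite !nsymbolsE.
pose R := [seq L i q | q <- enum [set q | unique_entry L i q]].
pose C := [seq L p j | p <- enum [set~ i]].
have sub : {subset undup (entries L) <= undup (entries delete_row_col) ++ R ++ C}.
  move=> _ /[!mem_undup] /mapP [[p q] _ ->]; rewrite !mem_cat mem_undup.
  case: (entry_delete_row_col_cases p q L_row_inj uij) => [-> // | [q' uq' ->] | [p' p'i ->]].
    by rewrite map_f ?orbT // mem_enum inE.
  by rewrite map_f ?orbT // mem_enum !inE.
apply: leq_trans (uniq_leq_size (undup_uniq _) sub) _.
by rewrite !size_cat !size_map -!cardE cardsC1 card_ord addnA.
Qed.

End DeleteRowCol.

(* 202 m + 256 is exactly the slack of the induction: losing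
   unique_in_row L i + m symbols keeps 229 m^2 + 27 m <= 256 k', since
   229 (m+1)^2 + 27 (m+1) - 256 m - (202 m + 256) = 229 m^2 + 27 m. *)
Lemma transversal_of_sparse_row (T : eqType) (m : nat) (L : array T m.+1) i j :
  (forall L' : array T m, latin L' ->
     229 * m ^ 2 + 27 * m <= 256 * nsymbols L' -> has_transversal L') ->
  latin L -> 229 * m.+1 ^ 2 + 27 * m.+1 <= 256 * nsymbols L ->
  unique_entry L i j -> 256 * unique_in_row L i <= 202 * m + 256 ->
  has_transversal L.
Proof.
move=> IH latL dense uij sparse.
apply: (has_transversal_delete_row_col uij); apply: IH; first exact: latin_delete_row_col.
have := nsymbols_delete_row_col latL uij.
by move: dense sparse; rewrite !expnS expn0 !muln1; nia.
Qed.

Section Improvement.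
Variables (T : eqType) (n : nat) (L : array T n).
Hypotheses (L_row_inj : forall i, injective (L i))
           (L_col_inj : forall j, injective (fun i => L i j)).
Implicit Types (s : {perm 'I_n}) (u v w x : 'I_n).

Definition distinct_at s u := [forall v, (v != u) ==> (L v (s v) != L u (s u))].
Definition distinct_set s := [set u | distinct_at s u].
Definition unique_set s := [set u | unique_entry L u (s u)].
Definition fresh s (y : T) := forall w, L w (s w) != y.

(* Since #|unique_set s| <= n, this orders permutations lexicographically by
   (#|distinct_set s|, #|unique_set s|). *)
Definition potential s := n.+1 * #|distinct_set s| + #|unique_set s|.

Lemma potential_lt_distinct s s' :
  distinct_set s \proper distinct_set s' -> potential s < potential s'.
Proof.
move=> /proper_card lt_d; rewrite /potential.
have le_u : #|unique_set s| <= n by have := max_card (mem (unique_set s)); rewrite card_ord.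
have : n.+1 * #|distinct_set s|.+1 <= n.+1 * #|distinct_set s'| by rewrite leq_mul2l lt_d orbT.
rewrite mulnS; lia.
Qed.

Lemma potential_lt_unique s s' : distinct_set s \subset distinct_set s' ->
  unique_set s \proper unique_set s' -> potential s < potential s'.
Proof.
move=> /subset_leq_card le_d /proper_card lt_u.
by rewrite /potential -addnS leq_add // leq_mul2l le_d orbT.
Qed.
Lemma unique_entry_fresh s a b : unique_entry L a b -> s a != b -> fresh s (L a b).
Proof. by move=> /unique_entryP uab sab w; apply: contra_neq sab => /uab [-> ->]. Qed.

Lemma distinct_atN_unique s u : ~~ distinct_at s u -> ~~ unique_entry L u (s u).
Proof.
apply: contra => uu; apply/forallP => v; apply/implyP => vu.
exact: unique_entry_neq.
Qed.

Lemma distinct_set_update s s' (X : {set 'I_n}) :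
  {in [predC X], s' =1 s} ->
  (forall u, u \in X -> fresh s (L u (s' u))) ->
  {in X &, forall u v, u != v -> L u (s' u) != L v (s' v)} ->
  distinct_set s \subset distinct_set s' /\ X \subset distinct_set s'.
Proof.
move=> same fresh_X dis.
have distinct_X u : u \in X -> distinct_at s' u.
  move=> uX; apply/forallP => v; apply/implyP => vu.
  case: (boolP (v \in X)) => vX; first by rewrite dis.
  by rewrite same ?fresh_X.
split; apply/subsetP => u; rewrite !inE; last exact: distinct_X.
case: (boolP (u \in X)) => uX; first by rewrite distinct_X.
move=> /forallP du; apply/forallP => v; apply/implyP => vu.
rewrite (same u uX); case: (boolP (v \in X)) => vX; first by rewrite eq_sym fresh_X.
by rewrite same //; apply: (implyP (du v)).
Qed.

Lemma swap_distinct s u v : u != v ->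
  fresh s (L u (s v)) -> fresh s (L v (s u)) -> L u (s v) != L v (s u) ->
  distinct_set s \subset distinct_set (tperm u v * s) /\
  [set u; v] \subset distinct_set (tperm u v * s).
Proof.
move=> uv fresh_u fresh_v neq_uv.
have s'u : (tperm u v * s)%g u = s v by rewrite permM tpermL.
have s'v : (tperm u v * s)%g v = s u by rewrite permM tpermR.
apply: distinct_set_update => [x|x|x y].
- by rewrite !inE negb_or => /andP [xu xv]; rewrite permM tpermD // eq_sym.
- by rewrite !inE => /orP [] /eqP ->; rewrite ?s'u ?s'v.
- rewrite !inE => /orP [] /eqP -> /orP [] /eqP -> xy; rewrite ?eqxx in xy;
  by rewrite ?s'u ?s'v // eq_sym.
Qed.

Lemma potential_lt_distinct_gain s s' u : ~~ distinct_at s u ->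
  distinct_set s \subset distinct_set s' -> u \in distinct_set s' -> potential s < potential s'.
Proof.
move=> nu sub us'; apply: potential_lt_distinct; apply/properP; split => //.
by exists u; rewrite // inE.
Qed.

Lemma swap_improves s u v : ~~ distinct_at s u -> u != v ->
  fresh s (L u (s v)) -> fresh s (L v (s u)) -> L u (s v) != L v (s u) ->
  exists s', potential s < potential s'.
Proof.
move=> nu uv fresh_u fresh_v neq_uv.
have [sub uv_sub] := swap_distinct uv fresh_u fresh_v neq_uv.
exists (tperm u v * s)%g; apply: (potential_lt_distinct_gain nu sub).
by apply: (subsetP uv_sub); rewrite !inE eqxx.
Qed.

Lemma improve_by_unique_swap s w : ~~ unique_entry L w (s w) ->
  n < unique_in_row L w + unique_in_col L (s w) -> exists s', potential s < potential s'.
Proof.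
move=> nw big.
pose A := s @^-1: [set q | unique_entry L w q].
pose B := [set v | unique_entry L v (s w)].
have [v] : exists v, v \in A :&: B.
  have cA : #|A| = unique_in_row L w by rewrite card_preimset //; apply: perm_inj.
  have cB : #|B| = unique_in_col L (s w) by [].
  apply/card_gt0P; have := subset_leq_card (subsetT (A :|: B)); rewrite cardsT card_ord.
  move: (cardsUI A B) big; rewrite cA cB.
  move: #|A :|: B| #|A :&: B| (unique_in_row L w) (unique_in_col L (s w)) => a b c d; lia.
rewrite !inE => /andP [uwv uvw].
have wv : w != v by apply: contraNneq nw => wv; rewrite {2}wv.
set s' := (tperm w v * s)%g.
have sw_sv : s w != s v by rewrite (inj_eq perm_inj).
have sv_sw : s v != s w by rewrite eq_sym.
have [sub _] := swap_distinct wv (unique_entry_fresh uwv sw_sv)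
  (unique_entry_fresh uvw sv_sw) (unique_entry_neq _ uvw wv).
exists s'; apply: potential_lt_unique => //; apply/properP; split; last first.
  by exists w; rewrite !inE // permM tpermL.
apply/subsetP => x; rewrite !inE /s' permM.
by case: tpermP => [->|->|] //; rewrite (negbTE nw).
Qed.

Lemma card_diag_hits s (F : 'I_n -> T) : injective F ->
  (forall v w, L w (s w) = F v -> ~~ unique_entry L w (s w)) ->
  #|[set v | [exists w, L w (s w) == F v]]| <= #|~: unique_set s|.
Proof.
move=> F_inj hit_nonunique; set H := [set v | _].
pose hitter v := odflt v [pick w | L w (s w) == F v].
have hitterP v : v \in H -> L (hitter v) (s (hitter v)) = F v.
  by rewrite inE /hitter => /existsP [w0 hw0]; case: pickP => [w /eqP //|/(_ w0)]; rewrite hw0.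
rewrite -(card_in_imset (f := hitter)); last first.
  by move=> x y xH yH E; apply: F_inj; rewrite -(hitterP _ xH) -(hitterP _ yH) E.
apply/subset_leq_card/subsetP => _ /imsetP [v vH ->].
by rewrite !inE; apply: (hit_nonunique v); apply: hitterP.
Qed.

Lemma card_col_hits s u : ~~ unique_entry L u (s u) ->
  #|[set v | [exists w, L w (s w) == L v (s u)]]| <= #|~: unique_set s|.
Proof.
move=> nu; apply: card_diag_hits => [x y /L_col_inj //|v w E].
have [wv|vw] := eqVneq v w; first by move: E; rewrite -wv => /L_row_inj /perm_inj ->.
by apply/negP => uw; move: (unique_entry_neq (s u) uw vw); rewrite E eqxx.
Qed.

Lemma card_row_hits s u : ~~ unique_entry L u (s u) ->
  #|[set v | [exists w, L w (s w) == L u (s v)]]| <= #|~: unique_set s|.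
Proof.
move=> nu; apply: card_diag_hits => [x y /L_row_inj /perm_inj //|v w E].
have [<- //|uw] := eqVneq u w.
by apply/negP => uw'; move: (unique_entry_neq (s v) uw' uw); rewrite E eqxx.
Qed.

Lemma improve_by_row s u : ~~ distinct_at s u ->
  #|~: unique_set s| < unique_in_row L u -> exists s', potential s < potential s'.
Proof.
move=> nu few; have nuu := distinct_atN_unique nu.
pose A := s @^-1: [set q | unique_entry L u q].
have cA : #|A| = unique_in_row L u by rewrite card_preimset //; apply: perm_inj.
have [v] := exists_notin (leq_ltn_trans (card_col_hits nuu) (leq_trans few (eq_leq (esym cA)))).
rewrite !inE negb_exists => uuv /forallP fresh_v.
have uv : u != v by apply: contraNneq nuu => uv; rewrite {2}uv.
apply: (swap_improves nu uv) => //.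
  by apply: (unique_entry_fresh uuv); rewrite (inj_eq perm_inj).
by rewrite eq_sym (unique_entry_neq _ uuv) // eq_sym.
Qed.

Lemma improve_by_col s u : ~~ distinct_at s u ->
  #|~: unique_set s| < unique_in_col L (s u) -> exists s', potential s < potential s'.
Proof.
move=> nu few; have nuu := distinct_atN_unique nu.
have [v] := exists_notin (leq_ltn_trans (card_row_hits nuu) few).
rewrite !inE negb_exists => uvu /forallP fresh_u.
have uv : u != v by apply: contraNneq nuu => uv; rewrite {1}uv.
apply: (swap_improves nu uv) => //.
  by apply: (unique_entry_fresh uvu); rewrite (inj_eq perm_inj) eq_sym.
exact: unique_entry_neq uvu uv.
Qed.

Lemma cycle_improves s u v w : ~~ distinct_at s u -> u != v -> u != w -> v != w ->
  fresh s (L u (s v)) -> fresh s (L v (s w)) -> fresh s (L w (s u)) ->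
  L u (s v) != L v (s w) -> L u (s v) != L w (s u) -> L v (s w) != L w (s u) ->
  exists s', potential s < potential s'.
Proof.
move=> nu uv uw vw fresh_u fresh_v fresh_w neq_uv neq_uw neq_vw.
set s' := (tperm u v * tperm u w * s)%g.
have s'u : s' u = s v by rewrite !permM tpermL tpermD // eq_sym.
have s'v : s' v = s w by rewrite !permM tpermR tpermL.
have s'w : s' w = s u by rewrite !permM (tpermD uw vw) tpermR.
have [sub uvw_sub] :
    distinct_set s \subset distinct_set s' /\ [set u; v; w] \subset distinct_set s'.
  apply: distinct_set_update => [x|x|x y].
  - rewrite !inE !negb_or => /andP [/andP [xu xv] xw].
    by rewrite !permM !tpermD // eq_sym.
  - by rewrite !inE => /orP [/orP []|] /eqP ->; rewrite ?s'u ?s'v ?s'w.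
  - rewrite !inE => /orP [/orP []|] /eqP -> /orP [/orP []|] /eqP -> xy; rewrite ?eqxx in xy;
    by rewrite ?s'u ?s'v ?s'w // eq_sym.
exists s'; apply: (potential_lt_distinct_gain nu sub).
by apply: (subsetP uvw_sub); rewrite !inE eqxx.
Qed.

Lemma improve_by_cycle s u : ~~ distinct_at s u ->
  #|[set v | unique_in_row L v == 0]| + #|~: unique_set s| < n ->
  (forall v, unique_in_row L v != 0 -> #|~: unique_set s| + 2 < unique_in_row L v) ->
  exists s', potential s < potential s'.
Proof.
move=> nu few_empty big_rows; have nuu := distinct_atN_unique nu.
have [v] : exists2 v, v \in ~: [set v | unique_in_row L v == 0] &
    v \notin [set v | [exists w, L w (s w) == L u (s v)]].
  apply: exists_notin; apply: leq_ltn_trans (card_row_hits nuu) _.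
  by move: (cardsC [set v | unique_in_row L v == 0]) few_empty; rewrite card_ord; lia.
rewrite !inE negb_exists => rv /forallP fresh_u.
have uv : u != v by apply/eqP => uv; move: (fresh_u u); rewrite {2}uv eqxx.
pose A := s @^-1: [set q | unique_entry L v q].
have cA : #|A| = unique_in_row L v by rewrite card_preimset //; apply: perm_inj.
pose E := [set w | L w (s u) == L u (s v)].
have cE : #|E| <= 1 by apply/card_le1_eqP => x y; rewrite !inE => /eqP <- /eqP /L_col_inj.
pose Bad := [set w | [exists w', L w' (s w') == L w (s u)]] :|: E :|: [set v].
have cBad : #|Bad| <= #|~: unique_set s| + 2.
  apply: leq_trans (leq_card_setU _ _).1 _; rewrite cards1 -[2]/(1 + 1) addnA leq_add2r.
  apply: leq_trans (leq_card_setU _ _).1 _.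
  by apply: leq_add cE; apply: card_col_hits.
have [w] := exists_notin (leq_ltn_trans cBad (leq_trans (big_rows v rv) (eq_leq (esym cA)))).
rewrite !inE !negb_or negb_exists => uvw /andP [/andP [/forallP fresh_w neq_w] wv].
have uw : u != w by apply/eqP => uw; move: (fresh_w u); rewrite {1}uw eqxx.
have vw : v != w by rewrite eq_sym.
apply: (cycle_improves nu uv uw vw) => //.
- by apply: (unique_entry_fresh uvw); rewrite (inj_eq perm_inj).
- exact: unique_entry_neq uvw uv.
- by rewrite eq_sym.
- by rewrite eq_sym; apply: unique_entry_neq uvw wv.
Qed.

End Improvement.

Lemma card_rows_without_unique (T : eqType) (m : nat) (L : array T m.+1) :
  229 * m.+1 ^ 2 + 27 * m.+1 <= 256 * nsymbols L ->
  128 * #|[set i | unique_in_row L i == 0]| <= 27 * m.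
Proof.
move=> dense; set E := [set i | _].
have le_unique : #|unique_entries L| <= #|~: E| * m.+1.
  have sub : unique_entries L \subset setX (~: E) [set: 'I_m.+1].
    apply/subsetP => -[p q]; rewrite !inE /= => upq; rewrite andbT -lt0n.
    by apply/card_gt0P; exists q; rewrite inE.
  by have := subset_leq_card sub; rewrite cardsX cardsT card_ord.
have := cardsC E; rewrite card_ord => cE.
have double := double_nsymbols L.
rewrite -(leq_pmul2l (ltn0Sn m)).
move: dense double le_unique cE; rewrite !expnS expn0 !muln1.
move: (nsymbols L) #|unique_entries L| #|E| #|~: E| => k g a b; nia.
Qed.

Section RichCase.
Variables (T : eqType) (m : nat) (L : array T m.+1).
Hypotheses (L_row_inj : forall i, injective (L i))
           (L_col_inj : forall j, injective (fun i => L i j)).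
Hypothesis dense : 229 * m.+1 ^ 2 + 27 * m.+1 <= 256 * nsymbols L.
Hypothesis rich_rows :
  forall i, unique_in_row L i != 0 -> 202 * m + 256 < 256 * unique_in_row L i.
Hypothesis rich_cols :
  forall j, unique_in_col L j != 0 -> 202 * m + 256 < 256 * unique_in_col L j.

Let empty_rows := [set i | unique_in_row L i == 0].
Let empty_cols := [set j | unique_in_col L j == 0].

Lemma card_empty_rows : 128 * #|empty_rows| <= 27 * m.
Proof. exact: card_rows_without_unique. Qed.

Lemma card_empty_cols : 128 * #|empty_cols| <= 27 * m.
Proof.
have := card_rows_without_unique (L := tr_array L); rewrite nsymbols_tr => /(_ dense).
by rewrite (eq_card (B := empty_cols)) // => j; rewrite !inE unique_in_row_tr.
Qed.

Variable s : {perm 'I_m.+1}.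
Hypothesis s_max : forall s', potential L s' <= potential L s.

Lemma no_improvement : ~ exists s', potential L s < potential L s'.
Proof. by case=> s'; rewrite ltnNge s_max. Qed.

Lemma nonunique_on_empty w :
  ~~ unique_entry L w (s w) -> (w \in empty_rows) || (s w \in empty_cols).
Proof.
move=> nw; apply: contraT; rewrite !inE negb_or => /andP [/rich_rows r /rich_cols c].
exfalso; apply: no_improvement; apply: improve_by_unique_swap nw _.
by move: r c; lia.
Qed.

Lemma card_nonunique_diag : #|~: unique_set L s| <= #|empty_rows| + #|empty_cols|.
Proof.
have sub : ~: unique_set L s \subset empty_rows :|: s @^-1: empty_cols.
  by apply/subsetP => w; rewrite !inE => /nonunique_on_empty; rewrite !inE.
apply: leq_trans (subset_leq_card sub) _; apply: leq_trans (leq_card_setU _ _).1 _.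
by rewrite card_preimset //; apply: perm_inj.
Qed.

Lemma distinct_everywhere u : distinct_at L s u.
Proof.
apply/negPn/negP => nu; apply: no_improvement.
have bad := card_nonunique_diag; have er := card_empty_rows; have ec := card_empty_cols.
have [ru|/rich_rows ru] := eqVneq (unique_in_row L u) 0; last first.
  by apply: (improve_by_row L_row_inj L_col_inj nu); move: ru bad er ec; lia.
have [cu|/rich_cols cu] := eqVneq (unique_in_col L (s u)) 0; last first.
  by apply: (improve_by_col L_row_inj nu); move: cu bad er ec; lia.
have : 0 < #|empty_rows| by apply/card_gt0P; exists u; rewrite inE ru.
move=> er1; apply: (improve_by_cycle L_row_inj L_col_inj nu).
  by rewrite -/empty_rows; move: er1 bad er ec; lia.
by move=> v /rich_rows rv; move: er1 rv bad er ec; lia.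
Qed.

End RichCase.

Lemma transversal_of_rich (T : eqType) (m : nat) (L : array T m.+1) :
  latin L -> 229 * m.+1 ^ 2 + 27 * m.+1 <= 256 * nsymbols L ->
  (forall i j, unique_entry L i j -> 202 * m + 256 < 256 * unique_in_row L i) ->
  (forall i j, unique_entry L i j -> 202 * m + 256 < 256 * unique_in_col L j) ->
  has_transversal L.
Proof.
case=> L_row_inj L_col_inj dense rich_row rich_col.
have rich_rows i : unique_in_row L i != 0 -> 202 * m + 256 < 256 * unique_in_row L i.
  by rewrite -lt0n => /card_gt0P [j]; rewrite inE => /rich_row.
have rich_cols j : unique_in_col L j != 0 -> 202 * m + 256 < 256 * unique_in_col L j.
  by rewrite -lt0n => /card_gt0P [i]; rewrite inE => /rich_col.
pose s := [arg max_(s > 1%g) potential L s].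
have s_max s' : potential L s' <= potential L s.
  by rewrite /s; case: arg_maxnP => // s0 _; apply.
have s_distinct := distinct_everywhere L_row_inj L_col_inj dense rich_rows rich_cols s_max.
exists s => x y Exy; apply/eqP; apply: contraT => xy.
by move/forallP/(_ y): (s_distinct x); rewrite eq_sym xy Exy eqxx.
Qed.

Theorem mainTheorem2 (T : eqType) (n : nat) (L : array T n) :
  latin L ->
  229 * n ^ 2 + 27 * n <= 256 * nsymbols L ->
  has_transversal L.
Proof.
elim: n L => [|m IH] L latL dense; first by exists 1%g => -[].
case: (boolP [exists i, exists j,
               unique_entry L i j && (256 * unique_in_row L i <= 202 * m + 256)]).
  case/existsP => i /existsP [j /andP [uij sparse]].
  exact: transversal_of_sparse_row IH latL dense uij sparse.
rewrite negb_exists => /forallP rich_rows.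
case: (boolP [exists i, exists j,
               unique_entry L i j && (256 * unique_in_col L j <= 202 * m + 256)]).
  case/existsP => i /existsP [j /andP [uij sparse]]; apply: has_transversal_tr.
  apply: (transversal_of_sparse_row (i := j) (j := i) IH (latin_tr latL)).
  - by rewrite nsymbols_tr.
  - by rewrite unique_entry_tr.
  - by rewrite unique_in_row_tr.
rewrite negb_exists => /forallP rich_cols.
apply: transversal_of_rich latL dense _ _ => i j uij; rewrite ltnNge.
  by move/existsPn/(_ j): (rich_rows i); rewrite uij.
by move/existsPn/(_ j): (rich_cols i); rewrite uij.
Qed.
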